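(* Let $2\leq k<n$ and let $A$ and $B$ be self-adjoint linear operators on an $n$-dimensional complex inner product space (equivalently, Hermitian $n\times n$ matrices). Suppose that for every $s=2,\ldots,k$, $$\lambda_s(A)+\lambda_n(B)=\lambda_s(A+B).$$ Then there exist $k-1$ nonzero, pairwise orthogonal vectors $\mathbf{x}^1,\ldots,\mathbf{x}^{k-1}$ such that for every $s=2,\ldots,k$, $$A\mathbf{x}^{s-1}=\lambda_s(A)\mathbf{x}^{s-1},\quad B\mathbf{x}^{s-1}=\lambda_n(B)\mathbf{x}^{s-1},\quad (A+B)\mathbf{x}^{s-1}=\lambda_s(A+B)\mathbf{x}^{s-1}.$$
   Context: For a self-adjoint operator (Hermitian matrix) $M$ of order $n$, its eigenvalues, counted with multiplicity, are indexed in non-increasing order as $\lambda_1(M)\geq\lambda_2(M)\geq\cdots\geq\lambda_n(M)$. *)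

From HB Require Import structures.
From mathcomp Require Import all_boot all_order all_algebra.
Set Implicit Arguments. Unset Strict Implicit. Unset Printing Implicit Defensive.
Import Order.TTheory GRing.Theory Num.Theory.
Local Open Scope ring_scope.

(* [eigen_seq A s] : s is the list of eigenvalues of the square matrix A,
   counted with multiplicity (the roots of the characteristic polynomial),
   listed in non-increasing order: s`_0 >= s`_1 >= ... >= s`_(n-1).
   Thus lambda_i(A) (1-based, as in the paper) is s`_(i-1). *)
Definition eigen_seq (C : numClosedFieldType) (n : nat) (A : 'M[C]_n) (s : seq C) : Prop :=
  [/\ size s = n,
      char_poly A = \prod_(x <- s) ('X - x%:P)
    & sorted (fun x y => y <= x) s].

Definition cdot (C : numClosedFieldType) (n : nat) (u v : 'cV[C]_n) : C :=
  ((map_mx Num.conj v)^T *m u) 0 0.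

From HB Require Import structures.
From mathcomp Require Import all_boot all_order all_algebra zify.
Import Order.TTheory GRing.Theory Num.Theory.
Local Open Scope ring_scope.
Local Open Scope sesquilinear_scope.
Set Implicit Arguments. Unset Strict Implicit. Unset Printing Implicit Defensive.

(* Proposition 1.  Fix i < k - 1, put t = lambda_(i+2)(A), b = lambda_n(B), and
   let f be the first index with lambda_(f+2)(A) = t, so that f <= i and the
   hypothesis at s = f + 2 reads t + b = lambda_(f+2)(A+B).  The vectors with no
   component along eigenvectors of A for eigenvalues < t (at most n - i - 2 of
   them) nor along eigenvectors of A + B for eigenvalues > t + b (at most f + 1
   of them) form a subspace of dimension > i - f.  For x in it, the Hermitian
   forms q_H(s)(x) = x^* (H - s) x satisfy q_A(t) >= 0, q_B(b) >= 0 and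
   q_(A+B)(t+b) <= 0, while q_(A+B)(t+b) = q_A(t) + q_B(b); hence both q_A(t)
   and q_B(b) vanish, which forces A x = t x and B x = b x.  The vector x^(i+1)
   is the (i - f)-th member of an orthonormal basis of that subspace: vectors
   with the same t are distinct members of one orthonormal basis, and vectors
   with different t are eigenvectors of A for distinct eigenvalues. *)

Section SortedSeq.
Variables (disp : Order.disp_t) (T : porderType disp) (x0 : T).
Variable s : seq T.
Hypothesis s_sorted : sorted (fun x y => (y <= x)%O) s.

Lemma sorted_ge_nth i j : (i <= j)%N -> (j < size s)%N ->
  (nth x0 s j <= nth x0 s i)%O.
Proof.
move=> le_ij lt_js; have ge_trans : transitive (fun x y : T => (y <= x)%O).
  by move=> x y z yx zy; apply: le_trans zy yx.
by apply: (sorted_leq_nth ge_trans (@lexx _ _)) => //; rewrite inE (leq_ltn_trans le_ij).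
Qed.

(* Only the entries after position i can lie strictly below the i-th one. *)
Lemma count_lt_nth i : (i < size s)%N ->
  (count (fun x => (x < nth x0 s i)%O) s <= size s - i.+1)%N.
Proof.
move=> lt_is; rewrite -[X in count _ X](cat_take_drop i.+1 s) count_cat.
have -> : count (fun x => (x < nth x0 s i)%O) (take i.+1 s) = 0%N.
  apply/eqP; rewrite -leqn0 leqNgt -has_count; apply/hasPn => y /(nthP x0) [j].
  rewrite size_takel // => lt_ji <-; rewrite nth_take // le_gtF //.
  exact: sorted_ge_nth (lt_ji : (j <= i)%N) lt_is.
by rewrite add0n -size_drop count_size.
Qed.

(* Only the entries before position i can lie strictly above the i-th one. *)
Lemma count_gt_nth i : (i < size s)%N ->
  (count (fun x => (nth x0 s i < x)%O) s <= i)%N.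
Proof.
move=> lt_is; rewrite -[X in count _ X](cat_take_drop i s) count_cat.
have -> : count (fun x => (nth x0 s i < x)%O) (drop i s) = 0%N.
  apply/eqP; rewrite -leqn0 leqNgt -has_count; apply/hasPn => y /(nthP x0) [j].
  rewrite size_drop ltn_subRL => lt_j <-; rewrite nth_drop le_gtF //.
  exact: sorted_ge_nth (leq_addr _ _) lt_j.
by rewrite addn0 (leq_trans (count_size _ _)) // size_take_min geq_minl.
Qed.

End SortedSeq.

Section HermitianSpectrum.
Variables (C : numClosedFieldType) (n : nat).
Implicit Types (H P : 'M[C]_n) (ls : seq C).

Lemma char_poly_similar P H : P \in unitmx ->
  char_poly (invmx P *m H *m P) = char_poly H.
Proof.
move=> P_unit; rewrite /char_poly /char_poly_mx.
have -> : 'X%:M - map_mx polyC (invmx P *m H *m P) =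
    map_mx polyC (invmx P) *m ('X%:M - map_mx polyC H) *m map_mx polyC P.
  rewrite mulmxBr mulmxBl !map_mxM; congr (_ - _).
  by rewrite scalar_mxC -mulmxA -map_mxM mulVmx // map_mx1 mulmx1.
rewrite !det_mulmx !det_map_mx mulrC mulrA -rmorphM.
by rewrite -det_mulmx mulmxV // det1 rmorph1 mul1r.
Qed.

Lemma hermitianD (A B : 'M[C]_n) :
  A \is hermsymmx -> B \is hermsymmx -> A + B \is hermsymmx.
Proof.
move=> /is_hermitianmxP hA /is_hermitianmxP hB; apply/is_hermitianmxP.
by rewrite linearD map_mxD /= scalerDr -hA -hB.
Qed.

Lemma hermitian_adj H : H \is hermsymmx -> H ^t* = H.
Proof. by move/is_hermitianmxP => {2}->; rewrite expr0 scale1r. Qed.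

Lemma hermitian_spectral H : H \is hermsymmx ->
  H = (spectralmx H)^t* *m diag_mx (spectral_diag H) *m spectralmx H.
Proof.
move=> hH; have /orthomx_spectralP {1}-> := hermitian_normalmx hH.
by rewrite invmx_unitary // spectral_unitarymx.
Qed.

Lemma spectral_diag_real H j : H \is hermsymmx ->
  spectral_diag H 0 j \is Num.real.
Proof. by move=> /hermitian_spectral_diag_real /mxOverP; apply. Qed.

Definition spectrum H : seq C := [seq spectral_diag H 0 j | j <- enum 'I_n].

Lemma eigen_seq_spectrum H ls : H \is hermsymmx -> eigen_seq H ls ->
  perm_eq ls (spectrum H).
Proof.
move=> hH [_ charH _]; apply: prod_XsubC_eq; rewrite -charH.
have /orthomx_spectralP {1}-> := hermitian_normalmx hH.
rewrite char_poly_similar ?spectral_unit // char_poly_trig ?diag_mx_is_trig //.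
rewrite big_map big_enum /=; apply: eq_bigr => j _.
by rewrite mxE eqxx mulr1n.
Qed.

Lemma eigen_seq_count H ls (p : pred C) : H \is hermsymmx -> eigen_seq H ls ->
  count p ls = #|[set j | p (spectral_diag H 0 j)]|.
Proof.
move=> hH /(eigen_seq_spectrum hH) /permP ->.
rewrite count_map cardE -size_filter enumT /enum_mem.
by congr size; apply: eq_filter => j; rewrite !inE.
Qed.

Lemma eigen_seq_real H ls x : H \is hermsymmx -> eigen_seq H ls ->
  x \in ls -> x \is Num.real.
Proof.
move=> hH /(eigen_seq_spectrum hH) /perm_mem ->.
by case/mapP => j _ ->; apply: spectral_diag_real.
Qed.

Lemma eigen_seq_last_le H ls j : H \is hermsymmx -> eigen_seq H ls ->
  ls`_n.-1 <= spectral_diag H 0 j.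
Proof.
move=> hH eH; have := eigen_seq_spectrum hH eH; case: eH => size_ls _ sorted_ls.
have : spectral_diag H 0 j \in spectrum H by apply: map_f; rewrite mem_enum.
move=> /[swap] /perm_mem <- /(nthP 0) [m lt_m <-].
rewrite size_ls in lt_m; apply: (sorted_ge_nth 0 sorted_ls); rewrite ?size_ls; lia.
Qed.

Lemma cdotE (u v : 'cV[C]_n) : cdot u v = (v ^t* *m u) 0 0.
Proof. by rewrite /cdot map_trmx. Qed.

Lemma hermitian_eigen_orthogonal H (u v : 'cV[C]_n) a c :
  H \is hermsymmx -> c \is Num.real -> H *m u = a *: u -> H *m v = c *: v ->
  a != c -> cdot u v = 0.
Proof.
move=> hH c_real Hu Hv neq_ac.
have vH : v ^t* *m H = c *: v ^t*.
  rewrite -{1}(hermitian_adj hH) -map_mxM -trmx_mul Hv.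
  by apply/matrixP => i j; rewrite !mxE rmorphM /= (conj_Creal c_real).
have vHu_a : (v ^t* *m H *m u) 0 0 = a * (v ^t* *m u) 0 0.
  by rewrite -mulmxA Hu -scalemxAr mxE.
have vHu_c : (v ^t* *m H *m u) 0 0 = c * (v ^t* *m u) 0 0.
  by rewrite vH -scalemxAl mxE.
apply/eqP; have : (a - c) * (v ^t* *m u) 0 0 == 0.
  by rewrite mulrBl -vHu_a -vHu_c subrr.
by rewrite cdotE mulf_eq0 subr_eq0 (negbTE neq_ac).
Qed.

End HermitianSpectrum.

Section QuadraticForm.
Variables (C : numClosedFieldType) (n : nat).
Implicit Types (H : 'M[C]_n) (x : 'cV[C]_n) (s : C).

(* The Hermitian form x^* (H - s) x; its sign detects whether H x = s x. *)
Definition qform H s x : C := (x ^t* *m (H - s%:M) *m x) 0 0.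

(* The j-th coordinate of x in the orthonormal eigenbasis of H. *)
Definition eigcoord H x (j : 'I_n) : C := (spectralmx H *m x) j 0.

Lemma qformD (A B : 'M[C]_n) s t x :
  qform (A + B) (s + t) x = qform A s x + qform B t x.
Proof.
rewrite /qform; have -> : A + B - (s + t)%:M = (A - s%:M) + (B - t%:M).
  by rewrite raddfD /= addrACA opprD.
by rewrite mulmxDr mulmxDl mxE.
Qed.

Lemma hermitian_shift_spectral H s : H \is hermsymmx ->
  H - s%:M = (spectralmx H)^t* *m diag_mx (spectral_diag H - const_mx s)
               *m spectralmx H.
Proof.
move=> hH; rewrite {1}(hermitian_spectral hH) linearB /= diag_const_mx.
rewrite mulmxBr mulmxBl mul_mx_scalar -scalemxAl.
by rewrite -invmx_unitary ?spectral_unitarymx // mulVmx ?spectral_unit // scalemx1.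
Qed.

Lemma qform_spectral H s x : H \is hermsymmx ->
  qform H s x = \sum_j (spectral_diag H 0 j - s) * `|eigcoord H x j| ^+ 2.
Proof.
move=> hH; rewrite /qform hermitian_shift_spectral //.
set z := spectralmx H *m x.
have zE : z ^t* = x ^t* *m (spectralmx H)^t* by rewrite trmx_mul map_mxM.
have -> : x ^t* *m ((spectralmx H)^t* *m diag_mx (spectral_diag H - const_mx s)
    *m spectralmx H) *m x = z ^t* *m diag_mx (spectral_diag H - const_mx s) *m z.
  by rewrite zE !mulmxA.
rewrite mxE; apply: eq_bigr => j _; rewrite /eigcoord -/z; clearbody z.
by rewrite mul_mx_diag !mxE normCKC mulrAC mulrC.
Qed.

Lemma qform_terms_ge0 H s x : H \is hermsymmx -> s \is Num.real ->
  (forall j, spectral_diag H 0 j < s -> eigcoord H x j = 0) ->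
  forall j, 0 <= (spectral_diag H 0 j - s) * `|eigcoord H x j| ^+ 2.
Proof.
move=> hH s_real low0 j; have [/low0 ->|] := boolP (spectral_diag H 0 j < s).
  by rewrite normr0 expr0n mulr0.
rewrite -real_leNgt ?spectral_diag_real // => le_sd.
by rewrite mulr_ge0 ?exprn_ge0 ?subr_ge0.
Qed.

Lemma qform_terms_le0 H s x : H \is hermsymmx -> s \is Num.real ->
  (forall j, s < spectral_diag H 0 j -> eigcoord H x j = 0) ->
  forall j, (spectral_diag H 0 j - s) * `|eigcoord H x j| ^+ 2 <= 0.
Proof.
move=> hH s_real high0 j; have [/high0 ->|] := boolP (s < spectral_diag H 0 j).
  by rewrite normr0 expr0n mulr0.
rewrite -real_leNgt ?spectral_diag_real // => le_ds.
by rewrite mulr_le0_ge0 ?exprn_ge0 ?subr_le0.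
Qed.

(* If all weights are nonnegative but the form is nonpositive, then every
   component of x outside the s-eigenspace vanishes, so H x = s x. *)
Lemma qform_eigen H s x : H \is hermsymmx ->
  (forall j, 0 <= (spectral_diag H 0 j - s) * `|eigcoord H x j| ^+ 2) ->
  qform H s x <= 0 -> H *m x = s *: x.
Proof.
move=> hH terms_ge0 q_le0.
have sum0 : \sum_j (spectral_diag H 0 j - s) * `|eigcoord H x j| ^+ 2 = 0.
  by apply/eqP; rewrite eq_le sumr_ge0 // andbT -qform_spectral.
have coord0 j : (spectral_diag H 0 j - s) * eigcoord H x j = 0.
  have /eqP := psumr_eq0P (i := j) (fun j _ => terms_ge0 j) sum0 isT.
  by rewrite mulf_eq0 expf_eq0 normr_eq0 /= => /orP[] /eqP ->; rewrite ?mul0r ?mulr0.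
have shift_x0 : (H - s%:M) *m x = 0.
  rewrite hermitian_shift_spectral // -!mulmxA.
  suff -> : diag_mx (spectral_diag H - const_mx s) *m (spectralmx H *m x) = 0.
    by rewrite mulmx0.
  by apply/colP => j; have := coord0 j; rewrite /eigcoord mul_diag_mx !mxE => ->.
by apply/eqP; rewrite -subr_eq0 -mul_scalar_mx -mulmxBl shift_x0.
Qed.

(* The core of the argument: if x avoids the part of A's spectrum below t and
   the part of (A + B)'s spectrum above t + b, where b is the least eigenvalue
   of B, then the three forms force x into the t-eigenspace of A and the
   b-eigenspace of B, since q_{A+B}(t+b) = q_A(t) + q_B(b). *)
Lemma eigen_sandwich (A B : 'M[C]_n) t b x :
  A \is hermsymmx -> B \is hermsymmx -> t \is Num.real -> b \is Num.real ->
  (forall j, spectral_diag A 0 j < t -> eigcoord A x j = 0) ->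
  (forall j, b <= spectral_diag B 0 j) ->
  (forall j, t + b < spectral_diag (A + B) 0 j -> eigcoord (A + B) x j = 0) ->
  A *m x = t *: x /\ B *m x = b *: x.
Proof.
move=> hA hB t_real b_real lowA geB highAB.
have termsA := qform_terms_ge0 hA t_real lowA.
have termsB : forall j, 0 <= (spectral_diag B 0 j - b) * `|eigcoord B x j| ^+ 2.
  by apply: qform_terms_ge0 => // j /lt_geF; rewrite geB.
have qA : 0 <= qform A t x by rewrite qform_spectral // sumr_ge0.
have qB : 0 <= qform B b x by rewrite qform_spectral // sumr_ge0.
have qAB : qform (A + B) (t + b) x <= 0.
  rewrite qform_spectral ?hermitianD // sumr_le0 // => j _.
  by apply: qform_terms_le0; rewrite ?hermitianD ?realD.
rewrite qformD in qAB; split; apply: qform_eigen => //.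
  by apply: le_trans qAB; rewrite lerDl.
by apply: le_trans qAB; rewrite lerDr.
Qed.

End QuadraticForm.

Section NullBasis.
Variables (C : numClosedFieldType) (p n : nat) (R : 'M[C]_(p, n)).

Lemma cdot_tr (u v : 'rV[C]_n) : cdot u^T v^T = dotmx u v.
Proof.
rewrite cdotE dotmxE !mxE; apply: eq_bigr => l _.
by rewrite !mxE mulrC.
Qed.

(* An orthonormal basis, as rows, of the null space {x | R x = 0}. *)
Definition null_basis : 'M[C]_(\rank (kermx R^T), n) :=
  schmidt (row_base (kermx R^T)).

(* The r-th null basis vector as a column, or 0 when r is out of range. *)
Definition null_vec (r : nat) : 'cV[C]_n :=
  if insub r is Some i then (row i null_basis)^T else 0.

Lemma rank_null_ge : (n - p <= \rank (kermx R^T))%N.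
Proof. by rewrite mxrank_ker mxrank_tr leq_sub2l // rank_leq_row. Qed.

Lemma null_vecP r : R *m null_vec r = 0.
Proof.
rewrite /null_vec; case: insubP => [i _ _|_]; last by rewrite mulmx0.
have : (row i null_basis <= kermx R^T)%MS.
  apply: submx_trans (row_sub _ _) _.
  by rewrite /null_basis eqmx_schmidt_free ?row_base_free // eq_row_base.
move/sub_kermxP => iR0; apply: trmx_inj.
by rewrite trmx_mul trmxK iR0 trmx0.
Qed.

Lemma cdot_null_vec r1 r2 : (r1 < \rank (kermx R^T))%N ->
  (r2 < \rank (kermx R^T))%N -> cdot (null_vec r1) (null_vec r2) = (r1 == r2)%:R.
Proof.
move=> lt_r1 lt_r2; rewrite /null_vec !insubT cdot_tr.
have /row_unitarymxP -> := schmidt_unitarymx (row_base (kermx R^T)) (rank_leq_col _).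
by rewrite -val_eqE.
Qed.

Lemma null_vec_neq0 r : (r < \rank (kermx R^T))%N -> null_vec r != 0.
Proof.
move=> lt_r; apply/eqP => vec0; have := cdot_null_vec lt_r lt_r.
by rewrite vec0 cdotE mulmx0 mxE eqxx => /eqP; rewrite eq_sym oner_eq0.
Qed.

End NullBasis.

Section RestrictRows.
Variables (C : numClosedFieldType) (m n : nat).

Definition restrict_rows (S : {set 'I_m}) (M : 'M[C]_(m, n)) : 'M[C]_(#|S|, n) :=
  rowsub (fun r => enum_val r) M.

Lemma restrict_rows_eq0 S M (x : 'cV[C]_n) : restrict_rows S M *m x = 0 ->
  forall j, j \in S -> (M *m x) j 0 = 0.
Proof.
move=> Mx0 j jS; have := congr1 (fun v : 'cV[C]_#|S| => v (enum_rank_in jS j) 0) Mx0.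
by rewrite /= mul_rowsub_mx !mxE enum_rankK_in.
Qed.

End RestrictRows.

Section Proposition.
Variables (C : numClosedFieldType) (n k : nat) (A B : 'M[C]_n).
Variables la lb lab : seq C.
Hypotheses (k_ge2 : (2 <= k)%N) (k_lt_n : (k < n)%N).
Hypotheses (hA : A \is hermsymmx) (hB : B \is hermsymmx).
Hypotheses (eA : eigen_seq A la) (eB : eigen_seq B lb) (eAB : eigen_seq (A + B) lab).
Hypothesis sum_eq : forall s : nat, (2 <= s <= k)%N ->
  la`_(s.-1) + lb`_(n.-1) = lab`_(s.-1).

Local Notation b := lb`_n.-1.
Local Notation hAB := (hermitianD hA hB).

Lemma la_real i : (i < n)%N -> la`_i \is Num.real.
Proof.
case: eA => size_la _ _ lt_in; apply: (eigen_seq_real hA eA).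
by rewrite mem_nth ?size_la.
Qed.

Lemma b_real : b \is Num.real.
Proof.
case: eB => size_lb _ _; apply: (eigen_seq_real hB eB); rewrite mem_nth // size_lb.
by rewrite prednK // (leq_ltn_trans _ k_lt_n).
Qed.

(* The first position f with lambda_(f+2)(A) = t; for t = lambda_(i+2)(A) we
   have f <= i, and the hypothesis at s = f + 2 gives t + b = lambda_(f+2)(A+B). *)
Definition first_pos (t : C) : nat := index t (behead la).

(* Since lambda_(i+2)(A) occurs at position i, its first occurrence is no later. *)
Lemma first_pos_le (i : 'I_k.-1) : (first_pos la`_i.+1 <= i)%N.
Proof.
case: eA => size_la _ _; have lt_i : (i < size (behead la))%N.
  rewrite size_behead size_la; have := ltn_ord i; lia.
by rewrite /first_pos -nth_behead index_nth.
Qed.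

Lemma sum_at_first_pos (i : 'I_k.-1) :
  la`_i.+1 + b = lab`_(first_pos la`_i.+1).+1.
Proof.
case: eA => size_la _ _; have lt_i : (i < size (behead la))%N.
  rewrite size_behead size_la; have := ltn_ord i; lia.
have le_fi := first_pos_le i.
have same : la`_(first_pos la`_i.+1).+1 = la`_i.+1.
  by rewrite -!nth_behead /first_pos nth_index // mem_nth.
rewrite -{1}same; apply: (sum_eq (s := (first_pos la`_i.+1).+2)).
by apply/andP; split => //; have := ltn_ord i; lia.
Qed.

(* Directions a vector must avoid to be pinned at t by the sandwich argument:
   A-eigendirections below t and (A+B)-eigendirections above t + b. *)
Definition below (t : C) := [set j : 'I_n | spectral_diag A 0 j < t].
Definition above (t : C) := [set j : 'I_n | t + b < spectral_diag (A + B) 0 j].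

Definition constraints (t : C) :=
  col_mx (restrict_rows (below t) (spectralmx A))
         (restrict_rows (above t) (spectralmx (A + B))).

(* The candidate vector x^(i+1): a fresh orthonormal null vector of the
   constraints at t = lambda_(i+2)(A), chosen by its offset from first_pos. *)
Definition eigvec (i : 'I_k.-1) : 'cV[C]_n :=
  null_vec (constraints la`_i.+1) (i - first_pos la`_i.+1).

(* Dimension count: at most n - (i+2) eigenvalues of A lie below lambda_(i+2)(A)
   and at most f + 1 eigenvalues of A + B lie above lambda_(f+2)(A+B). *)
Lemma null_dim_gt (i : 'I_k.-1) :
  (i - first_pos la`_i.+1 < \rank (kermx (constraints la`_i.+1)^T))%N.
Proof.
have lt_i := ltn_ord i; have le_fi := first_pos_le i.
case: (eA) => size_la _ sorted_la; case: (eAB) => size_lab _ sorted_lab.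
have card_below : (#|below la`_i.+1| <= n - i.+2)%N.
  have -> : #|below la`_i.+1| = count (fun x => x < la`_i.+1) la.
    by rewrite (eigen_seq_count _ hA eA).
  by rewrite -size_la; apply: (count_lt_nth 0 sorted_la); rewrite ?size_la; lia.
have card_above : (#|above la`_i.+1| <= (first_pos la`_i.+1).+1)%N.
  have -> : #|above la`_i.+1| =
      count (fun x => lab`_(first_pos la`_i.+1).+1 < x) lab.
    by rewrite (eigen_seq_count _ hAB eAB) /above sum_at_first_pos.
  by apply: (count_gt_nth 0 sorted_lab); rewrite ?size_lab; lia.
apply: leq_trans (rank_null_ge _).
(* abstract the cardinals so that lia treats them as opaque naturals *)
by move: (#|below _|) (#|above _|) card_below card_above => nb na; lia.
Qed.

Lemma eigvec_eigen (i : 'I_k.-1) :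
  A *m eigvec i = la`_i.+1 *: eigvec i /\ B *m eigvec i = b *: eigvec i.
Proof.
have /eqP := null_vecP (constraints la`_i.+1) (i - first_pos la`_i.+1).
rewrite mul_col_mx col_mx_eq0 => /andP[/eqP below0 /eqP above0].
apply: eigen_sandwich => //.
- by apply: la_real; have := ltn_ord i; lia.
- exact: b_real.
- by move=> j lt_j; apply: (restrict_rows_eq0 below0); rewrite inE.
- by move=> j; apply: eigen_seq_last_le.
- by move=> j lt_j; apply: (restrict_rows_eq0 above0); rewrite inE.
Qed.

(* The null space is large enough for the chosen offset, so x^(i+1) != 0. *)
Lemma eigvec_neq0 (i : 'I_k.-1) : eigvec i != 0.
Proof. exact: null_vec_neq0 (null_dim_gt i). Qed.

(* Equal eigenvalues: distinct offsets in one orthonormal basis.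
   Distinct eigenvalues: orthogonality of eigenvectors of A. *)
Lemma eigvec_orthogonal (i j : 'I_k.-1) : i != j -> cdot (eigvec i) (eigvec j) = 0.
Proof.
move=> neq_ij; have [same_t|neq_t] := eqVneq la`_i.+1 la`_j.+1.
  have lt_i := null_dim_gt i; have lt_j := null_dim_gt j.
  have le_fi := first_pos_le i; have le_fj := first_pos_le j.
  rewrite /eigvec same_t in lt_i le_fi *; rewrite cdot_null_vec //.
  suff /negbTE -> : (i - first_pos la`_j.+1 != j - first_pos la`_j.+1)%N by [].
  by apply: contra neq_ij => /eqP eq_off; apply/eqP/val_inj => /=; lia.
have [eigAi _] := eigvec_eigen i; have [eigAj _] := eigvec_eigen j.
apply: (hermitian_eigen_orthogonal hA _ eigAi eigAj neq_t).
by apply: la_real; have := ltn_ord j; lia.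
Qed.

Lemma eigvec_spec (i : 'I_k.-1) :
  [/\ A *m eigvec i = la`_i.+1 *: eigvec i, B *m eigvec i = b *: eigvec i
    & (A + B) *m eigvec i = lab`_i.+1 *: eigvec i].
Proof.
have [eigA eigB] := eigvec_eigen i; split => //.
rewrite mulmxDl eigA eigB -scalerDl (sum_eq (s := i.+2)) //.
by apply/andP; split => //; have := ltn_ord i; lia.
Qed.

End Proposition.

Theorem proposition1 (C : numClosedFieldType) (n k : nat) (A B : 'M[C]_n)
    (la lb lab : seq C) :
  (2 <= k)%N -> (k < n)%N ->
  A \is hermsymmx -> B \is hermsymmx ->
  eigen_seq A la -> eigen_seq B lb -> eigen_seq (A + B) lab ->
  (forall s : nat, (2 <= s <= k)%N ->
     la`_(s.-1) + lb`_(n.-1) = lab`_(s.-1)) ->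
  exists x : 'I_k.-1 -> 'cV[C]_n,
    [/\ forall i, x i != 0,
        forall i j, i != j -> cdot (x i) (x j) = 0
      & forall i : 'I_k.-1,
          [/\ A *m x i = la`_i.+1 *: x i,
              B *m x i = lb`_(n.-1) *: x i
            & (A + B) *m x i = lab`_i.+1 *: x i]].
Proof.
move=> k_ge2 k_lt_n hA hB eA eB eAB sum_eq.
exists (eigvec A B la lb); split => [i | i j neq_ij | i].
- exact: (eigvec_neq0 k_ge2 k_lt_n hA hB eA eAB sum_eq).
- exact: (eigvec_orthogonal k_ge2 k_lt_n hA hB eA eB eAB sum_eq).
- exact: (eigvec_spec k_ge2 k_lt_n hA hB eA eB sum_eq).
Qed.
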